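(* Let $q>1$. There is no $u\in C^{4}(\mathbb{R}^{2})$, $u>0$, solving $\Delta^{2}u+u^{-q}=0$ in $\mathbb{R}^{2}$ and satisfying $\lim_{|x|\to+\infty}(\ln|x|)^{1/q}u(x)=+\infty$. Consequently, there is no such solution with $\inf_{\mathbb{R}^{2}}u>0$. *)

From Stdlib Require Import Reals List.
From Coquelicot Require Import Coquelicot.
Open Scope R_scope.

Definition dx (f : R -> R -> R) : R -> R -> R :=
  fun x y => Derive (fun t => f t y) x.
Definition dy (f : R -> R -> R) : R -> R -> R :=
  fun x y => Derive (fun t => f x t) y.

(* Iterated partial derivative along a list of directions
   (true = d/dx1, false = d/dx2), innermost derivative last in the list. *)
Fixpoint Dpart (l : list bool) (f : R -> R -> R) : R -> R -> R :=
  match l with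
  | nil => f
  | b :: l' => (if b then dx else dy) (Dpart l' f)
  end.

Definition norm2 (x y : R) : R := sqrt (x ^ 2 + y ^ 2).

Definition cont2 (f : R -> R -> R) : Prop :=
  forall x y eps, 0 < eps -> exists delta, 0 < delta /\
    forall x' y', norm2 (x' - x) (y' - y) < delta ->
      Rabs (f x' y' - f x y) < eps.

Definition C4 (u : R -> R -> R) : Prop :=
  (forall l : list bool, (length l < 4)%nat -> forall x y,
      ex_derive (fun t => Dpart l u t y) x /\ ex_derive (fun t => Dpart l u x t) y)
  /\ (forall l : list bool, (length l <= 4)%nat -> cont2 (Dpart l u)).

Definition lap (f : R -> R -> R) : R -> R -> R :=
  fun x y => dx (dx f) x y + dy (dy f) x y.
Definition bilap (f : R -> R -> R) : R -> R -> R := lap (lap f).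

Definition positive_solution (q : R) (u : R -> R -> R) : Prop :=
  C4 u /\ (forall x y, 0 < u x y) /\
  (forall x y, bilap u x y + Rpower (u x y) (- q) = 0).

(* We prove more than stated: no positive C^4 function u on R^2 satisfies
   Delta^2 u < 0 everywhere, so both growth conditions of the theorem are
   superfluous.  The proof uses circle integrals.  For a C^2 function g let
   circ g r be the integral of g over the circle of radius r (in polar
   coordinates) and flux g r the integral of its radial derivative.
   Differentiating under the integral sign gives
     (circ g)' = flux g   and   (r flux g)' = r circ (Delta g),
   the second from the divergence form of the Laplacian in polar
   coordinates, the angular term integrating to zero by periodicity.
   Applied to u and to w = Delta u this yields radial profiles v = circ u
   and w = circ (Delta u) with (r v')' = r w and (r w')' = r L, L < 0.
   An elementary ODE argument then shows that r w' <= -c, so w -> -oo like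
   -c ln r, whence r v' <= K - r^2 / 2 and v -> -oo like -r^2 / 4,
   contradicting u > 0.  The file develops, in order: continuity and the
   chain rule in polar coordinates, the two circle-integral identities, the
   C^2 regularity of u and Delta u, the ODE lemmas, and the theorem. *)
From Stdlib Require Import Reals Lra Lia FunctionalExtensionality.
From Coquelicot Require Import Coquelicot.
Open Scope R_scope.

Lemma norm2_le_l1 a b : norm2 a b <= Rabs a + Rabs b.
Proof.
  pose proof (Rabs_pos a); pose proof (Rabs_pos b).
  unfold norm2. rewrite <- (sqrt_square (Rabs a + Rabs b)) by lra.
  apply sqrt_le_1_alt.
  rewrite <- (pow2_abs a), <- (pow2_abs b). nra.
Qed.

(* Epsilon-delta joint continuity is Coquelicot's continuity at every point
   (whose neighbourhoods are squares rather than discs). *)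
Lemma cont2_continuity_2d f x y : cont2 f -> continuity_2d_pt f x y.
Proof.
  intros Hf eps. destruct (Hf x y eps (cond_pos eps)) as [d [Hd Hclose]].
  assert (Hd2 : 0 < d / 2) by lra.
  exists (mkposreal _ Hd2). simpl. intros x' y' Hx Hy. apply Hclose.
  pose proof (norm2_le_l1 (x' - x) (y' - y)). lra.
Qed.

Lemma cont2_continuous f x y :
  cont2 f -> continuous (fun z : R * R => f (fst z) (snd z)) (x, y).
Proof. intro Hf. apply continuity_2d_pt_filterlim, cont2_continuity_2d, Hf. Qed.

Lemma continuity_2d_pt_snd F r t :
  continuity_2d_pt F r t -> continuous (fun s => F r s) t.
Proof.
  intro HF. apply continuity_2d_pt_filterlim in HF.
  apply (continuous_comp_2 (fun _ => r) (fun s => s) F t);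
    [apply continuous_const | apply continuous_id | exact HF].
Qed.

Lemma continuity_2d_pt_cos r t : continuity_2d_pt (fun _ v => cos v) r t.
Proof.
  apply (continuity_1d_2d_pt_comp cos (fun _ v => v));
    [apply continuity_cos | apply continuity_2d_pt_id2].
Qed.

Lemma continuity_2d_pt_sin r t : continuity_2d_pt (fun _ v => sin v) r t.
Proof.
  apply (continuity_1d_2d_pt_comp sin (fun _ v => v));
    [apply continuity_sin | apply continuity_2d_pt_id2].
Qed.

(* A function of the plane written in polar coordinates (r, t); r may be
   any real number, which spares us any boundary case at r = 0. *)
Definition polar (g : R -> R -> R) (r t : R) : R := g (r * cos t) (r * sin t).

Lemma continuity_2d_pt_polar g r t : cont2 g -> continuity_2d_pt (polar g) r t.
Proof.
  intro Hg. apply continuity_2d_pt_filterlim. unfold polar.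
  apply (continuous_comp_2 (fun z : R * R => fst z * cos (snd z))
    (fun z : R * R => fst z * sin (snd z)) g).
  - apply (continuity_2d_pt_filterlim (fun u v => u * cos v)).
    apply continuity_2d_pt_mult;
      [apply continuity_2d_pt_id1 | apply continuity_2d_pt_cos].
  - apply (continuity_2d_pt_filterlim (fun u v => u * sin v)).
    apply continuity_2d_pt_mult;
      [apply continuity_2d_pt_id1 | apply continuity_2d_pt_sin].
  - apply cont2_continuous, Hg.
Qed.

Ltac continuity_2d :=
  repeat first
    [ apply continuity_2d_pt_plus | apply continuity_2d_pt_minus
    | apply continuity_2d_pt_mult | apply continuity_2d_pt_opp
    | apply continuity_2d_pt_id1 | apply continuity_2d_pt_cos
    | apply continuity_2d_pt_sin | apply continuity_2d_pt_const
    | apply continuity_2d_pt_polar; assumption ].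

Definition C1 (g : R -> R -> R) : Prop :=
  (forall x y, ex_derive (fun t => g t y) x /\ ex_derive (fun t => g x t) y)
  /\ cont2 g /\ cont2 (dx g) /\ cont2 (dy g).

Definition C2 (g : R -> R -> R) : Prop := C1 g /\ C1 (dx g) /\ C1 (dy g).

Lemma C1_differentiable g x y :
  C1 g -> differentiable_pt_lim g x y (dx g x y) (dy g x y).
Proof.
  intros [Hex [_ [Hdx _]]].
  apply filterdiff_differentiable_pt_lim.
  eapply filterdiff_ext_lin.
  - apply (is_derive_filterdiff g x y (dx g)).
    + apply filter_forall. intros [a b]. apply Derive_correct, (proj1 (Hex a b)).
    + apply Derive_correct, (proj2 (Hex x y)).
    + apply cont2_continuous, Hdx.
  - intros [a b]. simpl. unfold plus, scal; simpl. unfold mult, dy; simpl. ring.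
Qed.

Lemma C1_chain g a b da db s :
  C1 g -> is_derive a s da -> is_derive b s db ->
  is_derive (fun s => g (a s) (b s)) s (dx g (a s) (b s) * da + dy g (a s) (b s) * db).
Proof.
  intros Hg Ha Hb. apply is_derive_Reals.
  apply derivable_pt_lim_comp_2d; [apply C1_differentiable, Hg | |];
    apply is_derive_Reals; assumption.
Qed.

Definition radial (g : R -> R -> R) (r t : R) : R :=
  cos t * polar (dx g) r t + sin t * polar (dy g) r t.
Definition angular (g : R -> R -> R) (r t : R) : R :=
  - sin t * polar (dx g) r t + cos t * polar (dy g) r t.

Lemma polar_derive_r g r t : C1 g -> is_derive (fun r => polar g r t) r (radial g r t).
Proof.
  intro Hg.
  replace (radial g r t) with
    (dx g (r * cos t) (r * sin t) * cos t + dy g (r * cos t) (r * sin t) * sin t)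
    by (unfold radial, polar; ring).
  apply (C1_chain g (fun r => r * cos t) (fun r => r * sin t)); [exact Hg | |];
    auto_derive; auto; ring.
Qed.

Lemma polar_derive_t g r t :
  C1 g -> is_derive (fun t => polar g r t) t (r * angular g r t).
Proof.
  intro Hg.
  replace (r * angular g r t) with
    (dx g (r * cos t) (r * sin t) * (- (r * sin t))
     + dy g (r * cos t) (r * sin t) * (r * cos t))
    by (unfold angular, polar; ring).
  apply (C1_chain g (fun t => r * cos t) (fun t => r * sin t)); [exact Hg | |];
    auto_derive; auto; ring.
Qed.

Lemma Derive_polar_r g r t : C1 g -> Derive (fun r => polar g r t) r = radial g r t.
Proof. intro Hg. apply is_derive_unique, polar_derive_r, Hg. Qed.

Lemma Derive_polar_t g r t : C1 g -> Derive (fun t => polar g r t) t = r * angular g r t.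
Proof. intro Hg. apply is_derive_unique, polar_derive_t, Hg. Qed.

Lemma ex_RInt_circle F r :
  (forall t, continuity_2d_pt F r t) -> ex_RInt (F r) 0 (2 * PI).
Proof.
  intro HF. apply (@ex_RInt_continuous R_CompleteNormedModule).
  intros t _. apply continuity_2d_pt_snd, HF.
Qed.

Definition circ (g : R -> R -> R) (r : R) : R := RInt (polar g r) 0 (2 * PI).
Definition flux (g : R -> R -> R) (r : R) : R := RInt (radial g r) 0 (2 * PI).

Lemma circ_derive g r : C1 g -> is_derive (circ g) r (flux g r).
Proof.
  intro Hg. pose proof Hg as [_ [Hc [Hdx Hdy]]].
  assert (Hder : forall u t, Derive (fun z => polar g z t) u = radial g u t)
    by (intros; apply Derive_polar_r, Hg).
  unfold flux. rewrite (RInt_ext _ (fun t => Derive (fun u => polar g u t) r))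
    by (intros; symmetry; apply Hder).
  apply (is_derive_RInt_param (fun u t => polar g u t)).
  - apply filter_forall. intros. eexists. apply polar_derive_r, Hg.
  - intros. apply (continuity_2d_pt_ext (radial g)); [intros; symmetry; apply Hder |].
    unfold radial. continuity_2d.
  - apply filter_forall. intros. apply ex_RInt_circle. intros. continuity_2d.
Qed.

(* The r-derivative of r * radial g and the t-derivative of angular g. *)
Definition scaled_radial_dr (g : R -> R -> R) (r t : R) : R :=
  radial g r t + r * (cos t * radial (dx g) r t + sin t * radial (dy g) r t).
Definition angular_dt (g : R -> R -> R) (r t : R) : R :=
  - radial g r t + r * (- sin t * angular (dx g) r t + cos t * angular (dy g) r t).

Lemma scaled_radial_derive g r t :
  C2 g -> is_derive (fun u => u * radial g u t) r (scaled_radial_dr g r t).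
Proof.
  intros [_ [Hdx Hdy]]. unfold radial. auto_derive.
  - repeat split; eexists; apply polar_derive_r; assumption.
  - rewrite (Derive_polar_r (dx g)), (Derive_polar_r (dy g)) by assumption.
    unfold scaled_radial_dr, radial. ring.
Qed.

Lemma angular_derive g r t : C2 g -> is_derive (angular g r) t (angular_dt g r t).
Proof.
  intros [_ [Hdx Hdy]]. unfold angular. auto_derive.
  - repeat split; eexists; apply polar_derive_t; assumption.
  - rewrite (Derive_polar_t (dx g)), (Derive_polar_t (dy g)) by assumption.
    unfold angular_dt, radial, angular. ring.
Qed.

(* The Laplacian in polar coordinates, in divergence form:
   d/dr (r g_r) + d/dt (g_t / r) = r (Delta g).  Mixed partial derivatives
   cancel without being assumed symmetric. *)
Lemma polar_laplacian g r t :
  scaled_radial_dr g r t + angular_dt g r t = r * polar (lap g) r t.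
Proof.
  pose proof (sin2_cos2 t) as Hpyth. unfold Rsqr in Hpyth.
  unfold scaled_radial_dr, angular_dt, radial, angular, polar, lap.
  transitivity (r * ((sin t * sin t + cos t * cos t)
    * (dx (dx g) (r * cos t) (r * sin t) + dy (dy g) (r * cos t) (r * sin t)))).
  - ring.
  - rewrite Hpyth. ring.
Qed.

Lemma C2_continuous g : C2 g ->
  cont2 g /\ cont2 (dx g) /\ cont2 (dy g) /\ cont2 (dx (dx g)) /\
  cont2 (dy (dx g)) /\ cont2 (dx (dy g)) /\ cont2 (dy (dy g)).
Proof. intros [[_ [? [? ?]]] [[_ [_ [? ?]]] [_ [_ [? ?]]]]]. tauto. Qed.

(* Integrating the polar Laplacian over a full turn: the angular term
   integrates to zero by periodicity. *)
Lemma RInt_scaled_radial_dr g r :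
  C2 g -> RInt (scaled_radial_dr g r) 0 (2 * PI) = r * circ (lap g) r.
Proof.
  intro Hg. pose proof (C2_continuous g Hg) as [? [? [? [? [? [? ?]]]]]].
  rewrite (RInt_ext _ (fun t => r * polar (lap g) r t - angular_dt g r t))
    by (intros; rewrite <- polar_laplacian; lra).
  apply is_RInt_unique.
  replace (r * circ (lap g) r) with
    (minus (scal r (circ (lap g) r)) (minus (angular g r (2 * PI)) (angular g r 0))).
  2: { unfold angular, polar. rewrite cos_2PI, sin_2PI, cos_0, sin_0,
         minus_eq_zero, minus_zero_r. reflexivity. }
  apply (is_RInt_minus (V := R_NormedModule) (fun t => scal r (polar (lap g) r t))).
  - apply (@is_RInt_scal R_NormedModule).
    apply (RInt_correct (V := R_CompleteNormedModule)).
    apply (ex_RInt_circle (fun u v => polar (dx (dx g)) u v + polar (dy (dy g)) u v)).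
    intros. continuity_2d.
  - apply (is_RInt_derive (V := R_CompleteNormedModule) (angular g r)).
    + intros. apply angular_derive, Hg.
    + intros. apply (continuity_2d_pt_snd (angular_dt g)).
      unfold angular_dt, radial, angular. continuity_2d.
Qed.

Lemma scaled_flux_derive g r :
  C2 g -> is_derive (fun r => r * flux g r) r (r * circ (lap g) r).
Proof.
  intro Hg. pose proof (C2_continuous g Hg) as [? [? [? [? [? [? ?]]]]]].
  assert (Hder : forall u t, Derive (fun z => z * radial g z t) u = scaled_radial_dr g u t)
    by (intros; apply is_derive_unique, scaled_radial_derive, Hg).
  apply (is_derive_ext (fun u => RInt (fun t => u * radial g u t) 0 (2 * PI))).
  { intro u. unfold flux. apply (RInt_scal (V := R_CompleteNormedModule)).
    apply ex_RInt_circle. intros. unfold radial. continuity_2d. }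
  rewrite <- (RInt_scaled_radial_dr g r Hg), (RInt_ext _ (fun t => Derive (fun u => u * radial g u t) r))
    by (intros; symmetry; apply Hder).
  apply (is_derive_RInt_param (fun u t => u * radial g u t)).
  - apply filter_forall. intros. eexists. apply scaled_radial_derive, Hg.
  - intros. apply (continuity_2d_pt_ext (scaled_radial_dr g)); [intros; symmetry; apply Hder |].
    unfold scaled_radial_dr, radial. continuity_2d.
  - apply filter_forall. intros. apply (ex_RInt_circle (fun u t => u * radial g u t)).
    intros. unfold radial. continuity_2d.
Qed.

Lemma cont2_plus a b : cont2 a -> cont2 b -> cont2 (fun x y => a x y + b x y).
Proof.
  intros Ha Hb x y eps Heps.
  destruct (Ha x y (eps / 2) ltac:(lra)) as [d1 [Hd1 Ha']].
  destruct (Hb x y (eps / 2) ltac:(lra)) as [d2 [Hd2 Hb']].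
  exists (Rmin d1 d2). split; [apply Rmin_pos; assumption |].
  intros x' y' Hclose. pose proof (Rmin_l d1 d2). pose proof (Rmin_r d1 d2).
  specialize (Ha' x' y' ltac:(lra)). specialize (Hb' x' y' ltac:(lra)).
  pose proof (Rabs_triang (a x' y' - a x y) (b x' y' - b x y)).
  replace (a x' y' + b x' y' - (a x y + b x y))
    with ((a x' y' - a x y) + (b x' y' - b x y)) by ring.
  lra.
Qed.

Lemma dx_plus a b :
  (forall x y, ex_derive (fun t => a t y) x) -> (forall x y, ex_derive (fun t => b t y) x) ->
  dx (fun x y => a x y + b x y) = fun x y => dx a x y + dx b x y.
Proof.
  intros Ha Hb. do 2 (apply functional_extensionality; intro).
  apply Derive_plus; [apply Ha | apply Hb].
Qed.

Lemma dy_plus a b :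
  (forall x y, ex_derive (fun t => a x t) y) -> (forall x y, ex_derive (fun t => b x t) y) ->
  dy (fun x y => a x y + b x y) = fun x y => dy a x y + dy b x y.
Proof.
  intros Ha Hb. do 2 (apply functional_extensionality; intro).
  apply Derive_plus; [apply Ha | apply Hb].
Qed.

Lemma C1_plus a b : C1 a -> C1 b -> C1 (fun x y => a x y + b x y).
Proof.
  intros [Ea [Ca [Xa Ya]]] [Eb [Cb [Xb Yb]]].
  split; [| split; [| split]].
  - intros x y. split.
    + exact (ex_derive_plus (fun t => a t y) (fun t => b t y) x
               (proj1 (Ea x y)) (proj1 (Eb x y))).
    + exact (ex_derive_plus (fun t => a x t) (fun t => b x t) y
               (proj2 (Ea x y)) (proj2 (Eb x y))).
  - apply cont2_plus; assumption.
  - rewrite dx_plus by (intros; first [apply (proj1 (Ea x y)) | apply (proj1 (Eb x y))]).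
    apply cont2_plus; assumption.
  - rewrite dy_plus by (intros; first [apply (proj2 (Ea x y)) | apply (proj2 (Eb x y))]).
    apply cont2_plus; assumption.
Qed.

Lemma C2_plus a b : C2 a -> C2 b -> C2 (fun x y => a x y + b x y).
Proof.
  intros [A0 [A1 A2]] [B0 [B1 B2]].
  pose proof A0 as [Ea _]. pose proof B0 as [Eb _].
  split; [| split].
  - apply C1_plus; assumption.
  - rewrite dx_plus by (intros; first [apply (proj1 (Ea x y)) | apply (proj1 (Eb x y))]).
    apply C1_plus; assumption.
  - rewrite dy_plus by (intros; first [apply (proj2 (Ea x y)) | apply (proj2 (Eb x y))]).
    apply C1_plus; assumption.
Qed.

Lemma C1_Dpart u l : C4 u -> (length l <= 3)%nat -> C1 (Dpart l u).
Proof.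
  intros [Hex Hcont] Hl. split; [| split; [| split]].
  - intros x y. apply (Hex l ltac:(lia)).
  - apply Hcont. lia.
  - apply (Hcont (cons true l)). simpl. lia.
  - apply (Hcont (cons false l)). simpl. lia.
Qed.

Lemma C2_Dpart u l : C4 u -> (length l <= 2)%nat -> C2 (Dpart l u).
Proof.
  intros Hu Hl. split; [| split].
  - apply C1_Dpart; [assumption | lia].
  - apply (C1_Dpart u (cons true l)); [assumption | simpl; lia].
  - apply (C1_Dpart u (cons false l)); [assumption | simpl; lia].
Qed.

Lemma C2_of_C4 u : C4 u -> C2 u.
Proof. intro Hu. apply (C2_Dpart u nil Hu). simpl. lia. Qed.

Lemma C2_lap u : C4 u -> C2 (lap u).
Proof.
  intro Hu.
  change (C2 (fun x y => Dpart (cons true (cons true nil)) u x y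
                         + Dpart (cons false (cons false nil)) u x y)).
  apply C2_plus; apply C2_Dpart; simpl; auto.
Qed.

(* Sum and difference rules for real functions, with Rplus/Rminus in the
   statement (Coquelicot states them with the generic plus and minus). *)
Lemma is_derive_Rplus (f g : R -> R) x a b :
  is_derive f x a -> is_derive g x b -> is_derive (fun t => f t + g t) x (a + b).
Proof. intros Hf Hg. exact (is_derive_plus f g x a b Hf Hg). Qed.

Lemma is_derive_Rminus (f g : R -> R) x a b :
  is_derive f x a -> is_derive g x b -> is_derive (fun t => f t - g t) x (a - b).
Proof. intros Hf Hg. exact (is_derive_minus f g x a b Hf Hg). Qed.

Lemma MVT_segment f df a b :
  a <= b -> (forall x, a <= x <= b -> is_derive f x (df x)) ->
  exists c, a <= c <= b /\ f b - f a = df c * (b - a).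
Proof.
  intros Hab Hder.
  destruct (MVT_gen f a b df) as [c [Hc Hmvt]];
    rewrite ?Rmin_left, ?Rmax_right in * by lra.
  - intros x Hx. apply Hder. lra.
  - intros x Hx. apply continuity_pt_filterlim.
    apply (@ex_derive_continuous R_AbsRing R_NormedModule). eexists. apply Hder. lra.
  - exists c. split; assumption.
Qed.

Lemma nonincreasing_of_derive f df a b :
  a <= b -> (forall x, a <= x <= b -> is_derive f x (df x)) ->
  (forall x, a <= x <= b -> df x <= 0) -> f b <= f a.
Proof.
  intros Hab Hder Hneg. destruct (MVT_segment f df a b Hab Hder) as [c [Hc Hmvt]].
  specialize (Hneg c Hc). nra.
Qed.

(* If (r phi)' = r L with L < 0 on the whole line, then r phi(r), which
   vanishes at r = 0, satisfies r phi(r) <= -c < 0 for r >= 1. *)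
Lemma scaled_flux_negative (phi L : R -> R) :
  (forall r, is_derive (fun r => r * phi r) r (r * L r)) -> (forall r, L r < 0) ->
  exists c, 0 < c /\ forall r, 1 <= r -> r * phi r <= - c.
Proof.
  intros Hder HL.
  assert (Hnonincr : forall a b, 0 <= a <= b -> b * phi b <= a * phi a).
  { intros a b Hab. apply (nonincreasing_of_derive (fun r => r * phi r) (fun r => r * L r));
      [lra | intros; apply Hder |].
    intros x Hx. specialize (HL x). nra. }
  assert (Hdrop : 1 * phi 1 < / 2 * phi (/ 2)).
  { destruct (MVT_segment (fun r => r * phi r) (fun r => r * L r) (/ 2) 1)
      as [m [Hm Hmvt]]; [lra | intros; apply Hder |].
    specialize (HL m). nra. }
  pose proof (Hnonincr 0 (/ 2) ltac:(lra)) as Hhalf.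
  exists (- (1 * phi 1)). split; [lra |].
  intros r Hr. rewrite Ropp_involutive. apply Hnonincr. lra.
Qed.

(* A profile with w' = dw and r dw(r) <= -c eventually decreases like
   -c ln r, hence drops below -1. *)
Lemma log_divergence (w dw : R -> R) c :
  0 < c -> (forall r, is_derive w r (dw r)) -> (forall r, 1 <= r -> r * dw r <= - c) ->
  exists R1, 1 <= R1 /\ forall r, R1 <= r -> w r <= -1.
Proof.
  intros Hc Hder Hflux.
  assert (Hlog : forall r, 1 <= r -> w r + c * ln r <= w 1).
  { intros r Hr. replace (w 1) with (w 1 + c * ln 1) by (rewrite ln_1; ring).
    apply (nonincreasing_of_derive (fun r => w r + c * ln r) (fun r => dw r + c * / r));
      [lra | |].
    - intros x Hx. apply (is_derive_Rplus w (fun r => c * ln r)); [apply Hder |].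
      auto_derive; [lra | field; lra].
    - intros x Hx. specialize (Hflux x (proj1 Hx)).
      apply Rmult_le_reg_l with x; [lra |]. field_simplify; lra. }
  set (R1 := exp ((Rabs (w 1) + 1) / c)).
  assert (Hexp : 0 <= (Rabs (w 1) + 1) / c)
    by (apply Rdiv_le_0_compat; [pose proof (Rabs_pos (w 1)) |]; lra).
  assert (HR1 : 1 <= R1)
    by (pose proof (exp_ineq1_le ((Rabs (w 1) + 1) / c)); unfold R1; lra).
  exists R1. split; [exact HR1 |]. intros r Hr.
  assert (HlnR1 : ln R1 <= ln r) by (apply ln_le; lra).
  unfold R1 in HlnR1. rewrite ln_exp in HlnR1.
  assert (c * ((Rabs (w 1) + 1) / c) = Rabs (w 1) + 1) by (field; lra).
  specialize (Hlog r ltac:(lra)). pose proof (Rle_abs (w 1)). nra.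
Qed.

Lemma flux_quadratic_bound (dv w : R -> R) R1 :
  (forall r, is_derive (fun r => r * dv r) r (r * w r)) ->
  0 <= R1 -> (forall r, R1 <= r -> w r <= -1) ->
  exists K, forall r, R1 <= r -> r * dv r <= K - r ^ 2 / 2.
Proof.
  intros Hder HR1 Hw. exists (R1 * dv R1 + R1 ^ 2 / 2). intros r Hr.
  cut (r * dv r + r ^ 2 / 2 <= R1 * dv R1 + R1 ^ 2 / 2); [lra |].
  apply (nonincreasing_of_derive (fun r => r * dv r + r ^ 2 / 2) (fun r => r * w r + r));
    [assumption | |].
  - intros x _. apply (is_derive_Rplus (fun r => r * dv r) (fun r => r ^ 2 / 2)); [apply Hder |].
    auto_derive; [auto | field].
  - intros x Hx. specialize (Hw x (proj1 Hx)). nra.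
Qed.

(* A profile with v' = dv and r dv(r) <= K - r^2 / 2 eventually decreases
   like -r^2 / 4 and becomes negative. *)
Lemma eventually_negative (v dv : R -> R) R1 K :
  1 <= R1 -> (forall r, is_derive v r (dv r)) ->
  (forall r, R1 <= r -> r * dv r <= K - r ^ 2 / 2) -> exists r, v r < 0.
Proof.
  intros HR1 Hder Hflux.
  set (C := v R1 + R1 ^ 2 / 4 - K * ln R1).
  assert (Hbound : forall r, R1 <= r -> v r + r ^ 2 / 4 - K * ln r <= C).
  { intros r Hr.
    apply (nonincreasing_of_derive (fun r => v r + r ^ 2 / 4 - K * ln r)
             (fun r => dv r + r / 2 - K * / r)); [assumption | |].
    - intros x Hx. apply (is_derive_Rminus (fun r => v r + r ^ 2 / 4) (fun r => K * ln r));
        [apply (is_derive_Rplus v (fun r => r ^ 2 / 4)); [apply Hder |] |];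
        auto_derive; try lra; field; lra.
    - intros x Hx. specialize (Hflux x (proj1 Hx)).
      apply Rmult_le_reg_l with x; [lra |]. field_simplify; lra. }
  set (r := R1 + 4 * (Rabs K + Rabs C + 1)).
  pose proof (Rabs_pos K). pose proof (Rabs_pos C).
  exists r. specialize (Hbound r ltac:(unfold r; lra)).
  assert (Hln : 0 <= ln r <= r).
  { split; [rewrite <- ln_1; apply ln_le; unfold r; lra |].
    pose proof (exp_ineq1_le (ln r)). rewrite exp_ln in *; unfold r in *; lra. }
  assert (K * ln r <= Rabs K * r).
  { pose proof (Rle_abs K). pose proof (Rle_abs (- K)). rewrite Rabs_Ropp in *.
    destruct (Rle_dec 0 K); nra. }
  assert (Hquad : r ^ 2 / 4 >= r * (Rabs K + Rabs C + 1)) by (unfold r; nra).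
  assert (Hr1 : 1 <= r) by (unfold r; lra).
  pose proof (Rle_abs C). clearbody r C. nra.
Qed.

Lemma superbiharmonic_profile_negative (v dv w dw L : R -> R) :
  (forall r, is_derive w r (dw r)) ->
  (forall r, is_derive (fun r => r * dw r) r (r * L r)) -> (forall r, L r < 0) ->
  (forall r, is_derive v r (dv r)) ->
  (forall r, is_derive (fun r => r * dv r) r (r * w r)) ->
  exists r, v r < 0.
Proof.
  intros Hw Hdw HL Hv Hdv.
  destruct (scaled_flux_negative dw L Hdw HL) as [c [Hc Hflux_w]].
  destruct (log_divergence w dw c Hc Hw Hflux_w) as [R1 [HR1 Hw_neg]].
  destruct (flux_quadratic_bound dv w R1 Hdv ltac:(lra) Hw_neg) as [K Hflux_v].
  exact (eventually_negative v dv R1 K HR1 Hv Hflux_v).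
Qed.

Lemma circ_lt g h r :
  cont2 g -> cont2 h -> (forall x y, g x y < h x y) -> circ g r < circ h r.
Proof.
  intros Hg Hh Hlt. apply RInt_lt.
  - pose proof PI_RGT_0. lra.
  - intros. apply continuity_2d_pt_snd. continuity_2d.
  - intros. apply continuity_2d_pt_snd. continuity_2d.
  - intros. apply Hlt.
Qed.

Lemma circ_zero r : circ (fun _ _ => 0) r = 0.
Proof.
  unfold circ, polar. rewrite (RInt_const (V := R_CompleteNormedModule)).
  apply Rmult_0_r.
Qed.

Lemma cont2_const c : cont2 (fun _ _ => c).
Proof.
  intros x y eps Heps. exists 1. split; [lra |].
  intros. rewrite Rminus_diag, Rabs_R0. exact Heps.
Qed.

Lemma no_positive_solution q u : ~ positive_solution q u.
Proof.
  intros [Hu [Hpos Heq]].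
  assert (Hu2 : C2 u) by (apply C2_of_C4, Hu).
  assert (Hw2 : C2 (lap u)) by (apply C2_lap, Hu).
  assert (Hbilap_neg : forall x y, bilap u x y < 0).
  { intros x y. pose proof (Heq x y). unfold Rpower in *.
    pose proof (exp_pos (- q * ln (u x y))). lra. }
  assert (Hbilap_cont : cont2 (bilap u)).
  { pose proof (C2_continuous _ Hw2) as [? [? [? [? [? [? ?]]]]]].
    apply cont2_plus; assumption. }
  destruct (superbiharmonic_profile_negative (circ u) (flux u) (circ (lap u))
              (flux (lap u)) (circ (bilap u))) as [r Hneg].
  - intro r. apply circ_derive, Hw2.
  - intro r. apply scaled_flux_derive, Hw2.
  - intro r. rewrite <- (circ_zero r).
    apply circ_lt; [assumption | apply cont2_const | assumption].
  - intro r. apply circ_derive, Hu2.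
  - intro r. apply scaled_flux_derive, Hu2.
  - apply (Rlt_irrefl 0). apply Rlt_trans with (circ u r); [| exact Hneg].
    rewrite <- (circ_zero r). apply circ_lt; [apply cont2_const | | assumption].
    apply (C2_continuous _ Hu2).
Qed.

Theorem mainTheorem17 (q : R) (hq : 1 < q) :
  (~ exists u : R -> R -> R,
      positive_solution q u /\
      (* lim_{|x| -> +oo} (ln |x|)^{1/q} u(x) = +oo *)
      (forall M : R, exists R0 : R, forall x y : R, R0 < norm2 x y ->
          M < Rpower (ln (norm2 x y)) (1 / q) * u x y))
  /\
  (~ exists u : R -> R -> R,
      positive_solution q u /\
      (* inf_{R^2} u > 0 *)
      (exists c : R, 0 < c /\ forall x y : R, c <= u x y)).
Proof.
  split; intros [u [Hsol _]]; exact (no_positive_solution q u Hsol).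
Qed.
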